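(* Let $V$ be a simple Yetter-Drinfeld module over $H=B(n,w,\gamma)$ with $\dim_\Bbbk V=p+1$ for some $p\ge0$, and let $v\in V$ be a standard element of type $(\alpha,\beta,x^rg^i)$ with $\alpha,\beta\in\Bbbk^*$, $r,i\in\mathbb{Z}$. If $\beta^n=1$, then $c_\beta^{r,i}(p+1,l)=0$ for all $0\le l\le p$.
   Context: $\Bbbk$ is an algebraically closed field of characteristic $0$; $n,w$ positive integers, $\gamma$ a primitive $n$-th root of unity. $H=B(n,w,\gamma)$ is the Hopf algebra generated by $x^{\pm1},g,y$ with relations $xx^{-1}=x^{-1}x=1$, $xg=gx$, $xy=yx$, $yg=\gamma gy$, $y^n=1-x^w=1-g^n$, with $\Delta(x)=x\otimes x$, $\Delta(g)=g\otimes g$, $\Delta(y)=y\otimes g+1\otimes y$, $\varepsilon(x)=\varepsilon(g)=1$, $\varepsilon(y)=0$, $S(x)=x^{-1}$, $S(g)=g^{-1}$, $S(y)=-yg^{-1}$; $G(H)=\{g^jx^k\}$. A (left-left) Yetter-Drinfeld module is a left $H$-module, left $H$-comodule $(V,\cdot,\delta)$ with $\delta(h\cdot v)=h_{(1)}v_{(-1)}S(h_{(3)})\otimes h_{(2)}\cdot v_{(0)}$; simple means no nonzero proper Yetter-Drinfeld submodules. A nonzero $v\in V$ is a standard element of type $(\alpha,\beta,h)$ if $h\in G(H)$, $\alpha,\beta\in\Bbbk^*$, $x\cdot v=\alpha v$, $g\cdot v=\beta v$, $\delta(v)=h\otimes v$. The elements $c_\beta^{r,i}(k,l)\in H$ ($0\le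 l\le k$) are defined by $c_\beta^{r,i}(0,0)=x^rg^i$ and, for $k\ge0$: $c_\beta^{r,i}(k+1,0)=c_\beta^{r,i}(k,0)S(y)+\beta yc_\beta^{r,i}(k,0)S(g)$; for $0<l<k+1$, $c_\beta^{r,i}(k+1,l)=c_\beta^{r,i}(k,l)S(y)+\beta\gamma^{-l}yc_\beta^{r,i}(k,l)S(g)+c_\beta^{r,i}(k,l-1)S(g)$; $c_\beta^{r,i}(k+1,k+1)=c_\beta^{r,i}(k,k)S(g)$. *)

From HB Require Import structures.
From mathcomp Require Import all_boot all_order all_algebra.
Set Implicit Arguments. Unset Strict Implicit. Unset Printing Implicit Defensive.
Import Order.TTheory GRing.Theory Num.Theory.
Local Open Scope ring_scope.

(* The Hopf algebra H = B(n,w,gam), realised through its PBW basis          *)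
(*   { x^a g^j y^m : a in Z, 0 <= j < n, 0 <= m < n }.                      *)
(* An element of H is written as a finite formal combination (a list) of    *)
(* words  x^a g^j y^m  with a : int and arbitrary j m : nat; such a word is *)
(* interpreted literally in H, and [coef h b] is the coordinate of h on the *)
(* (normalised) basis monomial b.  Two lists denote the same element of H   *)
(* iff all coordinates agree.                                               *)

(* (a, j, m) stands for the word x^a g^j y^m *)
Definition mono := (int * nat * nat)%type.
Definition Hel (k : fieldType) := seq (k * mono).

(* normal form of x^a g^j y^m, using g^n = x^w and y^n = 1 - x^w *)
Definition hnorm (k : fieldType) (n w : nat) (b : mono) : Hel k :=
  let: (a, j, m) := b in
  let q := (m %/ n)%N in
  [seq ((-1) ^+ t * ('C(q, t))%:R,
        (a + (w * (j %/ n))%N%:Z + (w * t)%N%:Z, (j %% n)%N, (m %% n)%N))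
  | t <- iota 0 q.+1].

Definition coef (k : fieldType) (n w : nat) (h : Hel k) (b : mono) : k :=
  \sum_(u <- h) u.1 * \sum_(d <- hnorm k n w u.2) d.1 * (d.2 == b)%:R.

Definition Hzero (k : fieldType) (n w : nat) (h : Hel k) : Prop :=
  forall b : mono, coef n w h b = 0.

Definition Hmono (k : fieldType) (b : mono) : Hel k := [:: (1, b)].
Definition Hadd (k : fieldType) (h1 h2 : Hel k) : Hel k := h1 ++ h2.
Definition Hscale (k : fieldType) (c : k) (h : Hel k) : Hel k :=
  [seq (c * u.1, u.2) | u <- h].

(* (x^a g^j y^m)(x^a' g^j' y^m') = gam^(m j') x^(a+a') g^(j+j') y^(m+m') *)
Definition mmul (b b' : mono) : mono :=
  (b.1.1 + b'.1.1, (b.1.2 + b'.1.2)%N, (b.2 + b'.2)%N).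
Definition mfac (k : fieldType) (gam : k) (b b' : mono) : k :=
  gam ^+ (b.2 * b'.1.2).
Definition Hmul (k : fieldType) (gam : k) (h1 h2 : Hel k) : Hel k :=
  [seq (u.1 * v.1 * mfac gam u.2 v.2, mmul u.2 v.2) | u <- h1, v <- h2].
Definition Hpow (k : fieldType) (gam : k) (h : Hel k) (m : nat) : Hel k :=
  iter m (Hmul gam h) (Hmono k (0%:Z, 0%N, 0%N)).

Definition hx (k : fieldType) : Hel k := Hmono k (1%:Z, 0%N, 0%N).
Definition hg (k : fieldType) : Hel k := Hmono k (0%:Z, 1%N, 0%N).
Definition hy (k : fieldType) : Hel k := Hmono k (0%:Z, 0%N, 1%N).
(* g^{-1} = x^{-w} g^{n-1} *)
Definition hginv (k : fieldType) (n w : nat) : Hel k :=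
  Hmono k (- (w%:Z), n.-1, 0%N).
Definition xpow (k : fieldType) (r : int) : Hel k := Hmono k (r, 0%N, 0%N).
(* g^i for i : int;  g^{-(j+1)} = x^{-w(j+1)} g^{(n-1)(j+1)} *)
Definition gpow (k : fieldType) (n w : nat) (i : int) : Hel k :=
  match i with
  | Posz j => Hmono k (0%:Z, j, 0%N)
  | Negz j => Hmono k (- ((w * j.+1)%N%:Z), (n.-1 * j.+1)%N, 0%N)
  end.

(* antipode: S(y) = - y g^{-1}, S(g) = g^{-1}, S(x) = x^{-1} *)
Definition Sy (k : fieldType) (n w : nat) (gam : k) : Hel k :=
  Hscale (-1) (Hmul gam (hy k) (hginv k n w)).
Definition Sg (k : fieldType) (n w : nat) : Hel k := hginv k n w.
Definition Smono (k : fieldType) (n w : nat) (gam : k) (b : mono) : Hel k :=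
  Hmul gam (Hmul gam (Hpow gam (Sy n w gam) b.2) (Hpow gam (hginv k n w) b.1.2))
       (xpow k (- b.1.1)).

Definition eps (k : fieldType) (h : Hel k) : k :=
  \sum_(u <- h) u.1 * (u.2.2 == 0)%N%:R.

(* Gaussian binomials for (A+B)^m with BA = gam AB *)
Fixpoint qbin (k : fieldType) (gam : k) (m t : nat) : k :=
  match m, t with
  | 0, 0 => 1
  | 0, _.+1 => 0
  | _.+1, 0 => 1
  | m'.+1, t'.+1 => qbin gam m' t'.+1 + gam ^+ (m' - t') * qbin gam m' t'
  end.

(* Delta(x^a g^j y^m) = sum_t qbin m t  x^a g^j y^t (x) x^a g^(j+t) y^(m-t) *)
Definition Dmono (k : fieldType) (gam : k) (b : mono) : seq (k * mono * mono) :=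
  [seq (qbin gam b.2 t, (b.1.1, b.1.2, t), (b.1.1, (b.1.2 + t)%N, (b.2 - t)%N))
  | t <- iota 0 b.2.+1].

(* (Delta (x) id) Delta h = sum c h1 (x) h2 (x) h3 *)
Definition Delta2 (k : fieldType) (gam : k) (h : Hel k)
  : seq (k * mono * mono * mono) :=
  flatten [seq flatten [seq [seq (u.1 * e.1.1 * f.1.1, f.1.2, f.2, e.2)
                             | f <- Dmono gam e.1.2]
                        | e <- Dmono gam u.2]
          | u <- h].

(* Yetter-Drinfeld modules on V = k^(p+1) (column vectors).                 *)
(* The H-module structure is given by the images X, Xi (= X^{-1}), G, Y of  *)
(* the generators x, x^{-1}, g, y, subject to the defining relations of H.  *)
(* The comodule structure is  delta(v) = sum_(b, M) in D  b (x) M v.        *)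

Section YD.
Variables (k : fieldType) (n w : nat) (gam : k) (p : nat).
Implicit Types (X Xi G Y : 'M[k]_p.+1) (D : seq (mono * 'M[k]_p.+1)).

Definition Xpow Xi X (a : int) : 'M[k]_p.+1 :=
  match a with Posz t => X ^+ t | Negz t => Xi ^+ t.+1 end.

Definition actm X Xi G Y (b : mono) : 'M[k]_p.+1 :=
  Xpow Xi X b.1.1 * G ^+ b.1.2 * Y ^+ b.2.

Definition act X Xi G Y (h : Hel k) (v : 'cV[k]_p.+1) : 'cV[k]_p.+1 :=
  \sum_(u <- h) u.1 *: (actm X Xi G Y u.2 *m v).

Definition is_Hmodule X Xi G Y : Prop :=
  X * Xi = 1 /\ Xi * X = 1 /\ X * G = G * X /\ X * Y = Y * X /\
  Y * G = gam *: (G * Y) /\ Y ^+ n = 1 - X ^+ w /\ G ^+ n = X ^+ w.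

(* elements of H (x) V as lists of pure tensors, and their coordinates *)
Definition tcoef (T : seq (Hel k * 'cV[k]_p.+1)) (b : mono) : 'cV[k]_p.+1 :=
  \sum_(u <- T) coef n w u.1 b *: u.2.
Definition teq (T T' : seq (Hel k * 'cV[k]_p.+1)) : Prop :=
  forall b, tcoef T b = tcoef T' b.
Definition t3coef (T : seq (mono * mono * 'cV[k]_p.+1)) (b1 b2 : mono)
  : 'cV[k]_p.+1 :=
  \sum_(u <- T) (coef n w (Hmono k u.1.1) b1 * coef n w (Hmono k u.1.2) b2) *: u.2.

Definition dapp D (v : 'cV[k]_p.+1) : seq (Hel k * 'cV[k]_p.+1) :=
  [seq (Hmono k d.1, d.2 *m v) | d <- D].

Definition is_Hcomodule D : Prop :=
  (forall v : 'cV[k]_p.+1, \sum_(d <- D) eps (Hmono k d.1) *: (d.2 *m v) = v) /\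
  (forall v b1 b2,
     t3coef (flatten [seq [seq (e.1.2, e.2, e.1.1 *: (d.2 *m v))
                           | e <- Dmono gam d.1] | d <- D]) b1 b2 =
     t3coef [seq (d.1, d'.1, d'.2 *m (d.2 *m v)) | d <- D, d' <- D] b1 b2).

(* delta(h.v) = h1 v(-1) S(h3) (x) h2 . v(0) *)
Definition is_YDcompat X Xi G Y D : Prop :=
  forall (h : Hel k) (v : 'cV[k]_p.+1),
    teq (dapp D (act X Xi G Y h v))
        [seq (Hmul gam (Hmul gam (Hmono k e.1.1.2) (Hmono k d.1))
                   (Smono n w gam e.2),
              e.1.1.1 *: act X Xi G Y (Hmono k e.1.2) (d.2 *m v))
        | e <- Delta2 gam h, d <- D].

Definition is_YDmodule X Xi G Y D : Prop :=
  [/\ is_Hmodule X Xi G Y, is_Hcomodule D & is_YDcompat X Xi G Y D].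

(* subspaces of V are represented by row spaces: v in U iff v^T <= U *)
Definition inW (U : 'M[k]_p.+1) (v : 'cV[k]_p.+1) : bool := (v^T <= U)%MS.

Definition is_YDsub X Xi G Y D (U : 'M[k]_p.+1) : Prop :=
  (forall h v, inW U v -> inW U (act X Xi G Y h v)) /\
  (forall v b, inW U v -> inW U (tcoef (dapp D v) b)).

Definition is_simpleYD X Xi G Y D : Prop :=
  is_YDmodule X Xi G Y D /\
  forall U : 'M[k]_p.+1, is_YDsub X Xi G Y D U -> (U == (0 : 'M[k]_p.+1))%MS \/ (U == (1%:M : 'M[k]_p.+1))%MS.

Definition is_standard X Xi G Y D (v : 'cV[k]_p.+1) (alpha beta : k) (r i : int)
  : Prop :=
  v != 0 /\ alpha != 0 /\ beta != 0 /\
  act X Xi G Y (hx k) v = alpha *: v /\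
  act X Xi G Y (hg k) v = beta *: v /\
  teq (dapp D v) [:: (Hmul gam (xpow k r) (gpow k n w i), v)].

End YD.

Fixpoint cel (k : fieldType) (n w : nat) (gam beta : k) (r i : int) (kk : nat)
  : nat -> Hel k :=
  match kk with
  | 0 => fun l => if l == 0%N then Hmul gam (xpow k r) (gpow k n w i) else [::]
  | kk'.+1 => fun l =>
      if l == 0%N then
        Hadd (Hmul gam (cel n w gam beta r i kk' 0) (Sy n w gam))
             (Hscale beta (Hmul gam (Hmul gam (hy k) (cel n w gam beta r i kk' 0))
                                (Sg k n w)))
      else if (l < kk'.+1)%N then
        Hadd (Hadd (Hmul gam (cel n w gam beta r i kk' l) (Sy n w gam))
                   (Hscale (beta * gam ^- l)
                      (Hmul gam (Hmul gam (hy k) (cel n w gam beta r i kk' l))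
                            (Sg k n w))))
             (Hmul gam (cel n w gam beta r i kk' l.-1) (Sg k n w))
      else if l == kk'.+1 then
        Hmul gam (cel n w gam beta r i kk' kk') (Sg k n w)
      else [::]
  end.

From HB Require Import structures.
From mathcomp Require Import all_boot all_order all_algebra.
From mathcomp Require Import zify ring.
Import GRing.Theory.
Local Open Scope ring_scope.
Set Implicit Arguments. Unset Strict Implicit.

(* The Yetter-Drinfeld condition for h = y gives, by induction on k,
   delta(y^k v) = sum_(l <= k) c(k,l) (x) y^l v.  Since yg = gam gy, each y^l v
   is a g-eigenvector with eigenvalue beta gam^-l, and
   y^n v = (1 - g^n) v = (1 - beta^n) v = 0.  If m is least with y^m v = 0, then
   m <= n, so y^0 v, ..., y^(m-1) v have distinct eigenvalues and are linearly
   independent; they span a Yetter-Drinfeld submodule, hence V, and m = p + 1.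
   For k = m the formula reads 0 = sum_(l < m) c(m,l) (x) y^l v, and independence
   forces every c(m,l) to vanish. *)

Lemma sum_alt_binS (R : comPzRingType) q (F : nat -> R) :
  \sum_(t < q.+2) (-1) ^+ t * ('C(q.+1, t))%:R * F t =
  \sum_(t < q.+1) (-1) ^+ t * ('C(q, t))%:R * F t -
  \sum_(t < q.+1) (-1) ^+ t * ('C(q, t))%:R * F t.+1.
Proof.
pose H t := (-1) ^+ t * ('C(q, t))%:R * F t.
have shift : \sum_(t < q.+1) H t = H 0%N + \sum_(t < q.+1) H t.+1.
  rewrite big_ord_recl; congr (_ + _); rewrite big_ord_recr /=.
  by rewrite /H bin_small // mulr0 mul0r addr0.
rewrite big_ord_recl /=.
under eq_bigr => t _ do rewrite /bump /= binS natrD mulrDr mulrDl.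
rewrite big_split /= addrA shift /H; congr (_ + _); first by rewrite !bin0.
rewrite -sumrN; apply: eq_bigr => t _.
by rewrite exprS; ring.
Qed.

Section Eigenvectors.
Variables (F : fieldType) (N : nat).

Lemma mulmx_exp_eigen (A : 'M[F]_N) (u : 'cV_N) mu j :
  A *m u = mu *: u -> A ^+ j *m u = mu ^+ j *: u.
Proof.
move=> Au; elim: j => [|j IH]; first by rewrite !expr0 mul1mx scale1r.
by rewrite exprS -mulmxE -mulmxA IH -scalemxAr Au scalerA -exprSr.
Qed.

Lemma mulmx_skew_eigen (A B : 'M[F]_N) c (u : 'cV_N) mu l :
  A * B = c *: (B * A) -> A *m u = mu *: u ->
  A *m (B ^+ l *m u) = (mu * c ^+ l) *: (B ^+ l *m u).
Proof.
move=> AB Au; elim: l => [|l IH]; first by rewrite !expr0 mul1mx mulr1.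
rewrite exprS -mulmxE -!mulmxA (mulmxA A) mulmxE AB -scalemxAl -mulmxE -mulmxA IH.
by rewrite -!scalemxAr scalerA exprS mulrCA.
Qed.

Lemma eigenvectors_row_free m (g : 'M[F]_N) (u : 'I_m -> 'rV_N) (a : 'I_m -> F) :
  injective a -> (forall j, u j *m g = a j *: u j) -> (forall j, u j != 0) ->
  row_free (\matrix_j u j).
Proof.
move=> inj_a ug nz_u; rewrite -kermx_eq0; apply/rowV0P => x /sub_kermxP.
rewrite mulmx_sum_row => x0.
have dxE := mxdirect_sum_eigenspace g (P := predT) (in2W inj_a).
have [C _ _ uniqC] := sub_dsumsmx dxE (sub0mx 1 _).
have C0 : C =1 fun=> 0.
  by move=> j; rewrite -(uniqC (fun=> 0)) ?big1 // => i _; exact: sub0mx.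
apply/rowP => j; rewrite mxE; apply/eqP.
have := C0 j; rewrite -(uniqC (fun i => x 0 i *: row i (\matrix_j u j))) //.
  by move/eqP; rewrite rowK scaler_eq0 (negPf (nz_u j)) orbF.
by move=> i _; rewrite rowK scalemx_sub //; apply/eigenspaceP.
Qed.

End Eigenvectors.

Section NormalForm.
Variables (k : fieldType) (n w : nat) (gam : k).
Hypotheses (n_gt0 : (0 < n)%N) (gam_prim : n.-primitive_root gam).

(* The coefficient of x^z in (1 - x^w)^Q = y^(nQ). *)
Definition ypow_coef (Q : nat) (z : int) : k :=
  \sum_(t < Q.+1) (-1) ^+ t * ('C(Q, t))%:R * (z == (w * t)%N%:Z)%:R.

Lemma ypow_coefS Q z : ypow_coef Q.+1 z = ypow_coef Q z - ypow_coef Q (z - w%:Z).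
Proof.
rewrite /ypow_coef (sum_alt_binS _ (fun t => (z == (w * t)%N%:Z)%:R)).
congr (_ - _); apply: eq_bigr => t _.
by congr (_ * _%:R); apply/eqP/eqP; rewrite mulnS PoszD; lia.
Qed.

Lemma ypow_coefD Q q z : ypow_coef (Q + q) z =
  \sum_(t < q.+1) (-1) ^+ t * ('C(q, t))%:R * ypow_coef Q (z - (w * t)%N%:Z).
Proof.
elim: q z => [|q IH] z.
  by rewrite addn0 big_ord1 expr0 bin0 !mul1r muln0 subr0.
rewrite addnS ypow_coefS !IH (sum_alt_binS _ (fun t => ypow_coef Q (z - (w * t)%N%:Z))).
congr (_ - _); apply: eq_bigr => t _.
by congr (_ * ypow_coef _ _); rewrite mulnS PoszD; lia.
Qed.

Definition mcoef (u b : mono) : k := \sum_(d <- hnorm k n w u) d.1 * (d.2 == b)%:R.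

Lemma coefE (h : Hel k) b : coef n w h b = \sum_(u <- h) u.1 * mcoef u.2 b.
Proof. by []. Qed.

Lemma mcoefE a j e a' j' e' : mcoef (a, j, e) (a', j', e') =
  (((j %% n)%N == j') && ((e %% n)%N == e'))%:R *
  ypow_coef (e %/ n) (a' - a - (w * (j %/ n))%N%:Z).
Proof.
rewrite /mcoef /hnorm big_map /ypow_coef mulr_sumr.
change (iota 0 (e %/ n).+1) with (index_iota 0 (e %/ n).+1).
rewrite big_mkord; apply: eq_bigr => t _ /=; rewrite !xpair_eqE.
have -> : (a + (w * (j %/ n))%N%:Z + (w * t)%N%:Z == a') =
          (a' - a - (w * (j %/ n))%N%:Z == (w * t)%N%:Z) by apply/eqP/eqP; lia.
by case: (_ == (w * t)%N%:Z); case: (_ == j'); case: (_ == e');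
  rewrite /= ?mulr0 ?mul0r ?mulr1 ?mul1r.
Qed.

(* Multiplying by fixed words on both sides commutes with normalising the
   middle word. *)
Lemma mcoef_mul_hnorm (a u c b : mono) :
  mfac gam a u * mfac gam (mmul a u) c * mcoef (mmul (mmul a u) c) b =
  \sum_(d <- hnorm k n w u) d.1 *
     (mfac gam a d.2 * mfac gam (mmul a d.2) c * mcoef (mmul (mmul a d.2) c) b).
Proof.
case: a => [[a1 j1] e1]; case: u => [[a0 j] e]; case: c => [[a2 j2] e2].
case: b => [[ab jb] eb].
rewrite /hnorm big_map.
change (iota 0 (e %/ n).+1) with (index_iota 0 (e %/ n).+1).
rewrite big_mkord /mfac /mmul /=.
under eq_bigr => t _ do rewrite mcoefE.
rewrite mcoefE.
set J' := (j1 + j %% n + j2)%N; set E' := (e1 + e %% n + e2)%N.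
have -> : (j1 + j + j2)%N = (j %/ n * n + J')%N by rewrite /J' {1}(divn_eq j n); lia.
have -> : (e1 + e + e2)%N = (e %/ n * n + E')%N by rewrite /E' {1}(divn_eq e n); lia.
rewrite !modnMDl !divnMDl //.
have -> : gam ^+ (e1 * j) * gam ^+ ((e1 + e) * j2) =
          gam ^+ (e1 * (j %% n)) * gam ^+ ((e1 + e %% n) * j2).
  rewrite -!exprD -(prim_expr_mod gam_prim) -[RHS](prim_expr_mod gam_prim).
  congr (gam ^+ _); rewrite {1}(divn_eq j n) {1}(divn_eq e n).
  have -> : (e1 * (j %/ n * n + j %% n) + (e1 + (e %/ n * n + e %% n)) * j2 =
     (e1 * (j %/ n) + e %/ n * j2) * n + (e1 * (j %% n) + (e1 + e %% n) * j2))%N by ring.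
  by rewrite modnMDl.
rewrite [(e %/ n + E' %/ n)%N]addnC ypow_coefD !mulr_sumr; apply: eq_bigr => t _.
rewrite mulnDr PoszD.
have -> : ab - (a1 + (a0 + (w * (j %/ n))%N%:Z + (w * t)%N%:Z) + a2) - (w * (J' %/ n))%N%:Z
   = ab - (a1 + a0 + a2) - ((w * (j %/ n))%N%:Z + (w * (J' %/ n))%N%:Z) - (w * t)%N%:Z.
  by ring.
set B := ypow_coef _ _; set I := _%:R; set g := gam ^+ _ * gam ^+ _.
set s := (-1) ^+ t * _; ring.
Qed.

Lemma coef_Hmul (h1 h2 : Hel k) b : coef n w (Hmul gam h1 h2) b =
  \sum_(u <- h1) \sum_(u' <- h2) u.1 * u'.1 * mfac gam u.2 u'.2 * mcoef (mmul u.2 u'.2) b.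
Proof. by rewrite coefE /Hmul big_allpairs_dep. Qed.

Definition sandwich (a : mono) (h c : Hel k) : Hel k :=
  Hmul gam (Hmul gam (Hmono k a) h) c.

Lemma coef_sandwich_mono a c u b : coef n w (sandwich a (Hmono k u) c) b =
  \sum_(c' <- c) mfac gam a u * c'.1 * mfac gam (mmul a u) c'.2 *
                 mcoef (mmul (mmul a u) c'.2) b.
Proof.
rewrite coef_Hmul /Hmul big_allpairs_dep !big_seq1 /=.
by apply: eq_bigr => c' _; rewrite !mul1r.
Qed.

Lemma coef_sandwich a c (h : Hel k) b :
  coef n w (sandwich a h c) b = \sum_(u <- h) u.1 * coef n w (sandwich a (Hmono k u.2) c) b.
Proof.
rewrite coef_Hmul {1}/Hmul big_allpairs_dep big_seq1 /=.
apply: eq_bigr => u _; rewrite coef_sandwich_mono mulr_sumr.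
by apply: eq_bigr => c' _ /=; rewrite mul1r; ring.
Qed.

Lemma coef_sandwich_hnorm a c u b : coef n w (sandwich a (Hmono k u) c) b =
  \sum_(d <- hnorm k n w u) d.1 * coef n w (sandwich a (Hmono k d.2) c) b.
Proof.
rewrite coef_sandwich_mono.
under eq_bigr => c' _.
  rewrite (_ : _ * c'.1 * _ * _ = c'.1 * (mfac gam a u * mfac gam (mmul a u) c'.2 *
                                          mcoef (mmul (mmul a u) c'.2) b)); last by ring.
  rewrite mcoef_mul_hnorm mulr_sumr; over.
rewrite exchange_big /=; apply: eq_bigr => d _.
by rewrite coef_sandwich_mono mulr_sumr; apply: eq_bigr => c' _; ring.
Qed.

Definition hsupp (h : Hel k) : seq mono :=
  flatten [seq [seq d.2 | d <- hnorm k n w u.2] | u <- h].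

Lemma coef_sandwich_supp a c (h : Hel k) b (S : seq mono) :
  uniq S -> {subset hsupp h <= S} ->
  coef n w (sandwich a h c) b =
  \sum_(b' <- S) coef n w (sandwich a (Hmono k b') c) b * coef n w h b'.
Proof.
move=> uS sS; rewrite coef_sandwich.
under [RHS]eq_bigr => b' _ do rewrite (coefE h) mulr_sumr.
rewrite exchange_big /= big_seq [RHS]big_seq; apply: eq_bigr => u uh.
rewrite coef_sandwich_hnorm mulr_sumr.
under [RHS]eq_bigr => b' _ do rewrite /mcoef !mulr_sumr.
rewrite exchange_big /= big_seq [RHS]big_seq; apply: eq_bigr => d dh.
have dS : d.2 \in S by apply: sS; apply/flatten_mapP; exists u => //; exact: map_f.
rewrite (big_rem _ dS) /= eqxx big1_seq ?addr0 => [|b' /andP[_ b'S]].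
  by rewrite mulr1; ring.
have [db'|] := eqVneq d.2 b'; last by rewrite !mulr0.
by rewrite -db' mem_rem_uniqF in b'S.
Qed.

Definition sandmap p a c (M : 'M[k]_p.+1) (L : seq (Hel k * 'cV[k]_p.+1)) :=
  [seq (sandwich a t.1 c, M *m t.2) | t <- L].

Lemma teq_sandmap p a c (M : 'M[k]_p.+1) L1 L2 :
  teq n w L1 L2 -> teq n w (sandmap a c M L1) (sandmap a c M L2).
Proof.
move=> eqL b; set S := undup (flatten [seq hsupp t.1 | t <- L1 ++ L2]).
suff tcoefE L : {subset L <= L1 ++ L2} -> tcoef n w (sandmap a c M L) b =
    \sum_(b' <- S) coef n w (sandwich a (Hmono k b') c) b *: (M *m tcoef n w L b').
  rewrite !tcoefE => [|t tL|t tL]; rewrite ?mem_cat ?tL ?orbT //.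
  by apply: eq_bigr => b' _; rewrite eqL.
move=> sL; rewrite /tcoef big_map.
under [RHS]eq_bigr => b' _ do rewrite mulmx_sumr scaler_sumr.
rewrite exchange_big /= big_seq [RHS]big_seq; apply: eq_bigr => t tL.
have sS : {subset hsupp t.1 <= S}.
  by move=> x xs; rewrite mem_undup; apply/flatten_mapP; exists t => //; exact: sL.
rewrite (coef_sandwich_supp _ _ _ (undup_uniq _) sS) scaler_suml.
by apply: eq_bigr => b' _; rewrite -scalemxAr scalerA.
Qed.

End NormalForm.

Section Words.
Variables (k : fieldType) (n w : nat) (gam : k).

Definition m1 : mono := (0%:Z, 0%N, 0%N).
Definition my : mono := (0%:Z, 0%N, 1%N).
Definition mg : mono := (0%:Z, 1%N, 0%N).

Lemma Hmul1l (h : Hel k) : Hmul gam (Hmono k m1) h = h.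
Proof.
rewrite /Hmul /= cats0 -[RHS]map_id; apply: eq_map => -[s [[a j] e]] /=.
by rewrite /mfac /mmul /= mul0n expr0 !mul1r mulr1 add0r.
Qed.

Lemma Hmul1r (h : Hel k) : Hmul gam h (Hmono k m1) = h.
Proof.
elim: h => [//|[s [[a j] e]] h IH].
rewrite /Hmul /= -/(Hmul gam h (Hmono k m1)) IH.
by rewrite /mfac /mmul /= muln0 expr0 !mulr1 addr0 !addn0.
Qed.

Lemma Hmul0r (h : Hel k) : Hmul gam h [::] = [::].
Proof. by elim: h. Qed.

Lemma Smono_y : Smono n w gam my = Sy n w gam.
Proof. by rewrite /Smono /= /xpow -/m1 !Hmul1r. Qed.

Lemma Smono_g : Smono n w gam mg = Sg k n w.
Proof. by rewrite /Smono /= /xpow -/m1 !Hmul1r Hmul1l. Qed.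

Lemma Delta2_y : Delta2 gam (hy k) =
  [:: (1, m1, m1, my); (1, m1, my, mg); (1, my, mg, mg)].
Proof. by rewrite /Delta2 /Dmono /= subnn expr0 !mul1r !add0r !mulr1. Qed.

Lemma coef_cat (h1 h2 : Hel k) b : coef n w (h1 ++ h2) b = coef n w h1 b + coef n w h2 b.
Proof. by rewrite !coefE big_cat. Qed.

Lemma coef_Hscale c (h : Hel k) b : coef n w (Hscale c h) b = c * coef n w h b.
Proof. by rewrite !coefE big_map mulr_sumr; apply: eq_bigr => u _; rewrite mulrA. Qed.

Lemma coef_nil b : coef n w ([::] : Hel k) b = 0.
Proof. by rewrite coefE big_nil. Qed.

Lemma cel_out beta r i kk l : (kk < l)%N -> cel n w gam beta r i kk l = [::].
Proof.
case: kk => [|kk] /=; first by case: l.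
by case: l => [//|l] lt_kk_l /=; rewrite ltnNge (ltnW lt_kk_l) gtn_eqF.
Qed.

Lemma coef_celS beta r i kk l b : (l <= kk.+1)%N ->
  coef n w (cel n w gam beta r i kk.+1 l) b =
  coef n w (Hmul gam (cel n w gam beta r i kk l) (Sy n w gam)) b +
  beta * gam ^- l *
    coef n w (Hmul gam (Hmul gam (hy k) (cel n w gam beta r i kk l)) (Sg k n w)) b +
  (if l is l'.+1 then coef n w (Hmul gam (cel n w gam beta r i kk l') (Sg k n w)) b
   else 0).
Proof.
case: l => [|l] le_l_kk /=.
  by rewrite coef_cat coef_Hscale expr0 invr1 mulr1 addr0.
case: ifP => [_|lt_l_kk]; first by rewrite !coef_cat coef_Hscale.
have -> : l = kk by apply/eqP; rewrite -eqSS eqn_leq le_l_kk leqNgt lt_l_kk.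
by rewrite eqxx (cel_out _ _ _ (ltnSn kk)) Hmul0r /Hmul /= !coef_nil mulr0 !add0r.
Qed.

End Words.

Section YDModule.
Variables (k : fieldType) (n w : nat) (gam : k) (p : nat).
Variables (X Xi G Y : 'M[k]_p.+1) (D : seq (mono * 'M[k]_p.+1)).
Hypotheses (n_gt0 : (0 < n)%N) (gam_prim : n.-primitive_root gam).
Hypotheses (HM : is_Hmodule n w gam X Xi G Y) (HC : is_YDcompat n w gam X Xi G Y D).

Local Notation act := (act X Xi G Y).
Local Notation actm := (actm X Xi G Y).

Lemma act_mono m u : act (Hmono k m) u = actm m *m u.
Proof. by rewrite /act big_seq1 scale1r. Qed.

Lemma actm1 : actm m1 = 1.
Proof. by rewrite /actm /= !expr0 !mul1r. Qed.

Lemma actm_y : actm my = Y.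
Proof. by rewrite /actm /= !expr0 expr1 !mul1r. Qed.

Lemma actm_g : actm mg = G.
Proof. by rewrite /actm /= !expr0 expr1 mul1r mulr1. Qed.

Lemma tcoef_cat (L1 L2 : seq (Hel k * 'cV[k]_p.+1)) b :
  tcoef n w (L1 ++ L2) b = tcoef n w L1 b + tcoef n w L2 b.
Proof. by rewrite /tcoef big_cat. Qed.

Lemma tcoef_iota (F : nat -> Hel k) (u : nat -> 'cV[k]_p.+1) N b :
  tcoef n w [seq (F l, u l) | l <- iota 0 N] b = \sum_(l < N) coef n w (F l) b *: u l.
Proof.
have -> : iota 0 N = index_iota 0 N by rewrite /index_iota subn0.
by rewrite /tcoef big_map big_mkord.
Qed.

Lemma dapp_Y u : teq n w (dapp D (Y *m u))
  (sandmap gam m1 (Sy n w gam) 1 (dapp D u) ++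
   sandmap gam m1 (Sg k n w) Y (dapp D u) ++ sandmap gam my (Sg k n w) G (dapp D u)).
Proof.
move=> b; have := HC (hy k) u b; rewrite act_mono actm_y => ->.
rewrite Delta2_y /= cats0 Smono_y Smono_g /sandmap /dapp -!map_comp.
by congr (tcoef _ _ (_ ++ _ ++ _) _); apply: eq_map => d /=;
  rewrite scale1r act_mono ?actm1 ?actm_y ?actm_g.
Qed.

Lemma mulmx_Yexp l (u : 'cV[k]_p.+1) : Y *m (Y ^+ l *m u) = Y ^+ l.+1 *m u.
Proof. by rewrite mulmxA exprS. Qed.

Lemma tcoef_sandmap_iota a c (M : 'M[k]_p.+1) (F : nat -> Hel k)
    (u : nat -> 'cV[k]_p.+1) N b :
  tcoef n w (sandmap gam a c M [seq (F l, u l) | l <- iota 0 N]) b =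
  \sum_(l < N) coef n w (sandwich gam a (F l) c) b *: (M *m u l).
Proof. by rewrite /sandmap -map_comp tcoef_iota. Qed.

Lemma gam_neq0 : gam != 0.
Proof.
apply/eqP => gam0; have := prim_expr_order gam_prim.
by rewrite gam0 expr0n gtn_eqF // => /esym/eqP; rewrite oner_eq0.
Qed.

Section StandardElement.
Variables (v : 'cV[k]_p.+1) (alpha beta : k) (r i : int).
Hypothesis vstd : is_standard n w gam X Xi G Y D v alpha beta r i.

Lemma X_Yexp_v l : X *m (Y ^+ l *m v) = alpha *: (Y ^+ l *m v).
Proof.
have [_ [_ [_ [XY _]]]] := HM; have [_ [_ [_ [Xv _]]]] := vstd.
rewrite act_mono /actm /= !expr0 expr1 !mulr1 in Xv.
have XY1 : X * Y = 1 *: (Y * X) by rewrite scale1r.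
by rewrite (mulmx_skew_eigen _ XY1 Xv) expr1n mulr1.
Qed.

Lemma Xi_Yexp_v l : Xi *m (Y ^+ l *m v) = alpha^-1 *: (Y ^+ l *m v).
Proof.
have [XXi [XiX _]] := HM; have [_ [a0 _]] := vstd.
apply: (scalerI a0); rewrite scalerA mulfV // scale1r scalemxAr -X_Yexp_v.
by rewrite !mulmxA -[Xi *m X]/(Xi * X) XiX !mul1mx.
Qed.

Lemma G_Yexp_v l : G *m (Y ^+ l *m v) = (beta * gam ^- l) *: (Y ^+ l *m v).
Proof.
have [_ [_ [_ [_ [YG _]]]]] := HM; have [_ [_ [_ [_ [Gv _]]]]] := vstd.
rewrite act_mono actm_g in Gv.
have GY : G * Y = gam^-1 *: (Y * G) by rewrite YG scalerA mulVf ?gam_neq0 ?scale1r.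
by rewrite (mulmx_skew_eigen _ GY Gv) exprVn.
Qed.

Lemma actm_Yexp_v b l : exists c, actm b *m (Y ^+ l *m v) = c *: (Y ^+ (b.2 + l) *m v).
Proof.
case: b => [[a j] e]; rewrite /actm /=.
have -> : Xpow Xi X a * G ^+ j * Y ^+ e *m (Y ^+ l *m v) =
          Xpow Xi X a *m (G ^+ j *m (Y ^+ (e + l) *m v)) by rewrite exprD -!mulmxE !mulmxA.
rewrite (mulmx_exp_eigen _ (G_Yexp_v _)) -scalemxAr.
case: a => a /=; rewrite ?(mulmx_exp_eigen _ (X_Yexp_v _)) ?(mulmx_exp_eigen _ (Xi_Yexp_v _));
  by rewrite scalerA; eexists.
Qed.

Lemma Yn_v : beta ^+ n = 1 -> Y ^+ n *m v = 0.
Proof.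
move=> beta_n; have [_ [_ [_ [_ [_ [Yn Gn]]]]]] := HM.
have Gv := G_Yexp_v 0; rewrite expr0 mul1mx invr1 mulr1 in Gv.
by rewrite Yn mulmxBl mul1mx -Gn (mulmx_exp_eigen _ Gv) beta_n scale1r subrr.
Qed.

Lemma dapp_Yexp_v kk : teq n w (dapp D (Y ^+ kk *m v))
  [seq (cel n w gam beta r i kk l, Y ^+ l *m v) | l <- iota 0 kk.+1].
Proof.
elim: kk => [|kk IH] b.
  by have [_ [_ [_ [_ [_ dv]]]]] := vstd; rewrite /= expr0 mul1mx dv.
rewrite exprS -mulmxE -mulmxA (dapp_Y _ b) !tcoef_cat.
rewrite !(teq_sandmap n_gt0 gam_prim _ _ _ IH)
  !tcoef_sandmap_iota tcoef_iota /sandwich.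
under eq_bigr => l _ do rewrite Hmul1l mul1mx.
under [in E in _ + (E + _)]eq_bigr => l _ do rewrite Hmul1l mulmx_Yexp.
under [in E in _ + (_ + E)]eq_bigr => l _ do rewrite G_Yexp_v scalerA.
under [RHS]eq_bigr => l _ do rewrite (@coef_celS _ _ _ _ _ _ _ kk l _ (ltn_ord l)) !scalerDl.
(* The three sums are the three terms of the recursion for c(kk+1, _); the
   boundary terms vanish because c(kk, kk+1) = 0. *)
rewrite !big_split /= [E in _ = E + _ + _]big_ord_recr [E in _ = _ + E + _]big_ord_recr.
rewrite [E in _ = _ + _ + E]big_ord_recl /= (cel_out _ _ _ _ _ _ (ltnSn kk)) Hmul0r /Hmul /=.
rewrite !coef_nil mulr0 !scale0r !addr0 add0r.
under [in E in _ = _ + E]eq_bigr => l _ do rewrite /bump leq0n add1n.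
rewrite -addrA; congr (_ + _); rewrite addrC; congr (_ + _).
by apply: eq_bigr => l _; rewrite mulrC.
Qed.

Section Orbit.
Variable m : nat.
Hypotheses (le_m_n : (m <= n)%N) (Ymv : Y ^+ m *m v = 0).
Hypothesis Ylv : forall l, (l < m)%N -> Y ^+ l *m v != 0.

Definition Yorbit : 'M[k]_(m, p.+1) := \matrix_(j < m) (Y ^+ j *m v)^T.

Lemma Yexp_v_eq0 l : (m <= l)%N -> Y ^+ l *m v = 0.
Proof. by move/subnK <-; rewrite exprD -mulmxE -mulmxA Ymv mulmx0. Qed.

Lemma Yexp_v_sub l : ((Y ^+ l *m v)^T <= Yorbit)%MS.
Proof.
have [lt_l_m | /Yexp_v_eq0 ->] := ltnP l m; last by rewrite trmx0 sub0mx.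
by rewrite -(rowK (fun j : 'I_m => (Y ^+ j *m v)^T) (Ordinal lt_l_m)) row_sub.
Qed.

Lemma row_free_Yorbit : row_free Yorbit.
Proof.
have [_ [_ [b0 _]]] := vstd.
apply: (eigenvectors_row_free (g := G^T) (a := fun j : 'I_m => beta * gam ^- j)).
- move=> s t /(mulfI b0) /invr_inj /eqP.
  rewrite (eq_prim_root_expr gam_prim) !modn_small => [/eqP/val_inj //||];
    exact: leq_trans (ltn_ord _) le_m_n.
- by move=> j; rewrite -trmx_mul G_Yexp_v linearZ.
- by move=> j; rewrite trmx_eq0 Ylv.
Qed.

Lemma Yorbit_free (c : 'I_m -> k) :
  \sum_j c j *: (Y ^+ j *m v) = 0 -> forall j, c j = 0.
Proof.
move=> c0 j; suff /eqP/rowP/(_ j) : \row_j c j == 0 by rewrite !mxE.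
rewrite -(mulmx_free_eq0 _ row_free_Yorbit) mulmx_sum_row.
under eq_bigr => t _ do rewrite rowK mxE -linearZ.
by rewrite -linear_sum c0 linear0.
Qed.

Lemma mulmx_Yorbit_sub (A : 'M[k]_p.+1) :
  (forall j : 'I_m, ((A *m (Y ^+ j *m v))^T <= Yorbit)%MS) ->
  forall u : 'cV[k]_p.+1, (u^T <= Yorbit)%MS -> ((A *m u)^T <= Yorbit)%MS.
Proof.
move=> AYv u /submxP[x ux]; rewrite trmx_mul ux -mulmxA.
apply: submx_trans (submxMl _ _) _; apply/row_subP => j.
by rewrite row_mul rowK -trmx_mul.
Qed.

Lemma YDsub_Yorbit : is_YDsub n w X Xi G Y D <<Yorbit>>%MS.
Proof.
split=> [h u | u b]; rewrite /inW !genmxE => hu.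
  have -> : act h u = (\sum_(t <- h) t.1 *: actm t.2) *m u.
    by rewrite /act mulmx_suml; apply: eq_bigr => t _; rewrite scalemxAl.
  apply: mulmx_Yorbit_sub hu => j; rewrite mulmx_suml linear_sum summx_sub // => t _.
  rewrite -scalemxAl linearZ scalemx_sub //; have [c ->] := actm_Yexp_v t.2 j.
  by rewrite linearZ scalemx_sub ?Yexp_v_sub.
have tcoefE u' :
    tcoef n w (dapp D u') b = (\sum_(d <- D) coef n w (Hmono k d.1) b *: d.2) *m u'.
  by rewrite /tcoef /dapp big_map mulmx_suml; apply: eq_bigr => d _; rewrite scalemxAl.
rewrite tcoefE; apply: mulmx_Yorbit_sub hu => j.
rewrite -tcoefE dapp_Yexp_v tcoef_iota linear_sum summx_sub // => l _.
by rewrite linearZ scalemx_sub ?Yexp_v_sub.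
Qed.

Lemma cel_Yorbit_eq0 l : (l < m)%N -> Hzero n w (cel n w gam beta r i m l).
Proof.
move=> lt_l_m b; have := dapp_Yexp_v m b.
rewrite Ymv tcoef_iota big_ord_recr /= Ymv scaler0 addr0.
rewrite /tcoef /dapp big_map big1 => [/esym/Yorbit_free/(_ (Ordinal lt_l_m)) //|d _].
by rewrite mulmx0 scaler0.
Qed.

Lemma Yorbit_len_eq : is_simpleYD n w gam X Xi G Y D -> m = p.+1.
Proof.
case=> _ /(_ _ YDsub_Yorbit) [/andP[sub0 _] | full].
  have [nz_v _] := vstd; rewrite genmxE in sub0.
  have := submx_trans (Yexp_v_sub 0) sub0.
  by rewrite expr0 mul1mx submx0 trmx_eq0 (negPf nz_v).
by have := eqmx_rank full; rewrite mxrank1 genmxE (eqP row_free_Yorbit).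
Qed.

End Orbit.

End StandardElement.

End YDModule.

Unset Implicit Arguments. Set Strict Implicit.

Theorem lemma3p15 (k : closedFieldType) (chark : [pchar k] =i pred0)
  (n w : nat) (gam : k) (n_gt0 : (0 < n)%N) (w_gt0 : (0 < w)%N)
  (gam_prim : n.-primitive_root gam)
  (p : nat) (X Xi G Y : 'M[k]_p.+1) (D : seq (mono * 'M[k]_p.+1))
  (Vsimple : is_simpleYD n w gam X Xi G Y D)
  (v : 'cV[k]_p.+1) (alpha beta : k) (r i : int)
  (vstd : is_standard n w gam X Xi G Y D v alpha beta r i)
  (beta_n : beta ^+ n = 1) :
  forall l : nat, (l <= p)%N -> Hzero n w (cel n w gam beta r i p.+1 l).
Proof.
have [[HM _ HC] _] := Vsimple.
have Ynv := Yn_v n_gt0 gam_prim HM vstd beta_n.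
have [|m /eqP Ymv m_min] := ex_minnP (P := fun l => Y ^+ l *m v == 0).
  by exists n; rewrite Ynv.
have le_m_n : (m <= n)%N by apply: m_min; rewrite Ynv.
have Ylv l : (l < m)%N -> Y ^+ l *m v != 0.
  by apply: contraTN => /m_min; rewrite -leqNgt.
have m_eq := Yorbit_len_eq n_gt0 gam_prim HM HC vstd le_m_n Ymv Ylv Vsimple.
move=> l le_l_p; rewrite -m_eq.
by apply: (cel_Yorbit_eq0 n_gt0 gam_prim HM HC vstd le_m_n Ymv Ylv); rewrite m_eq.
Qed.
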